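(* Let $X$ be a Banach space, $W\subseteq X$ a convex, symmetric and bounded set, $1<p<\infty$, and $Y=\Delta_p(W,X)$. A subset $A\subseteq W$ is a Banach-Saks subset of $X$ if and only if $A$ is a Banach-Saks subset of $Y$.
   Context: The Davis-Figiel-Johnson-Pe\l czy\'nski interpolation space $\Delta_p(W,X)$ is $\{x\in X:\|x\|_Y<\infty\}$ with $\|x\|_Y=\|(|x|_n)_n\|_{\ell_p}$, where $|x|_n=\inf\{\lambda>0: x/\lambda\in 2^nW+2^{-n}B_X\}$ and $B_X$ is the closed unit ball. A subset of a Banach space is a Banach-Saks set if every sequence in it has a subsequence whose Ces\`aro means converge in norm. *)

From HB Require Import structures.
From mathcomp Require Import all_boot all_order all_algebra.
From mathcomp Require Import all_classical all_reals all_analysis.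
Set Implicit Arguments. Unset Strict Implicit. Unset Printing Implicit Defensive.
Import Order.TTheory GRing.Theory Num.Theory.
Import numFieldNormedType.Exports.
Local Open Scope classical_set_scope.
Local Open Scope ring_scope.

Section DFJP.
Variables (R : realType) (X : normedModType R).

Definition symmetric_set (W : set X) : Prop := forall x, W x -> W (- x).

Definition closed_unit_ball : set X := [set b | `|b| <= 1].

Definition dfjp_level (W : set X) (n : nat) : set X :=
  [set z | exists w b, W w /\ closed_unit_ball b /\
           z = (2 ^+ n : R) *: w + (2 ^- n : R) *: b].

Definition dfjp_gauge (W : set X) (n : nat) (x : X) : R :=
  inf [set l : R | 0 < l /\ dfjp_level W n (l^-1 *: x)].

(* ||x||_Y = ( sum_n |x|_n^p )^{1/p}, an extended real (+oo off Y) *)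
Definition dfjp_norm (W : set X) (p : R) (x : X) : \bar R :=
  poweR (\sum_(0 <= n <oo) ((dfjp_gauge W n x) `^ p)%:E)%E p^-1.

Definition dfjp_space (W : set X) (p : R) : set X :=
  [set x | (dfjp_norm W p x < +oo)%E].

Definition cesaro (u : nat -> X) (phi : nat -> nat) (k : nat) : X :=
  (k.+1%:R)^-1 *: \sum_(i < k.+1) u (phi i).

Definition strictly_increasing (phi : nat -> nat) : Prop :=
  forall m n, (m < n)%N -> (phi m < phi n)%N.

Definition banach_saks_X (A : set X) : Prop :=
  forall u : nat -> X, (forall n, A (u n)) ->
    exists phi, strictly_increasing phi /\
      exists y : X, cesaro u phi @ \oo --> y.

Definition banach_saks_Y (W : set X) (p : R) (A : set X) : Prop :=
  forall u : nat -> X, (forall n, A (u n)) ->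
    exists phi, strictly_increasing phi /\
      exists y : X, dfjp_space W p y /\
        (fun k => dfjp_norm W p (cesaro u phi k - y)) @ \oo --> 0%E.

End DFJP.

(* Every Cesaro mean of a sequence in W lies in W, and so does half the
   difference of two such means.  Hence, if the means c_k converge in X to y,
   then z = c_k - y is a norm-limit of 2W.  Such a z has |z|_n <= 2^(1-n), since
   z/lambda almost lies in 2^n W once lambda > 2^(1-n), and also
   |z|_n <= 2^n |z|, since z/lambda lies in 2^(-n) B_X once lambda >= 2^n |z|.
   Interpolating, |z|_n^4 <= (2^(1-n))^3 (2^n |z|) = 8 |z| 4^(-n), so
   ||z||_Y^p is dominated by a geometric series whose sum tends to 0 with |z|.
   Conversely, boundedness of W gives |z| <= (M + 1) |z|_0 <= (M + 1) ||z||_Y. *)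
From Pilot Require Import Defs.
From HB Require Import structures.
From mathcomp Require Import all_boot all_order all_algebra.
From mathcomp Require Import all_classical all_reals all_analysis.
From mathcomp Require Import ring lra.
Set Implicit Arguments. Unset Strict Implicit. Unset Printing Implicit Defensive.
Import Order.TTheory GRing.Theory Num.Theory.
Import numFieldNormedType.Exports.
Local Open Scope classical_set_scope.
Local Open Scope ring_scope.

Section GeometricMajorant.
Variable R : realType.

Lemma powR_le_geometric (p t g : R) (n : nat) : 0 < p -> 0 <= t -> 0 <= g ->
  g <= 2 * (2 ^+ n)^-1 -> g <= 2 ^+ n * t ->
  g `^ p <= (8 * t) `^ (p / 4) * ((4^-1) `^ (p / 4)) ^+ n.
Proof.
move=> p0 t0 g0 g_small g_norm.
have a0 : 0 < (2 ^+ n : R) by apply: exprn_gt0.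
set a := (2 ^+ n : R) in a0 g_small g_norm *.
have g4_le : g ^+ 4 <= 8 * t * (4^-1) ^+ n.
  apply: (@le_trans _ _ ((2 * a^-1) ^+ 3 * (a * t))).
    rewrite exprSr; apply: ler_pM; [exact: exprn_ge0 | exact: g0 | | exact: g_norm].
    by apply: lerXn2r; rewrite // nnegrE mulr_ge0 // invr_ge0 ltW.
  have -> : (4^-1 : R) ^+ n = (a ^+ 2)^-1.
    by rewrite exprVn /a -exprM mulnC exprM expr2 -natrM.
  by rewrite le_eqVlt; apply/orP; left; apply/eqP; field; rewrite gt_eqF.
have s0 : 0 <= p / 4 by rewrite divr_ge0 // ltW.
have -> : g `^ p = (g ^+ 4) `^ (p / 4).
  by rewrite -powR_mulrn // -powRrM; congr (_ `^ _); field.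
apply: (le_trans (ge0_ler_powR s0 _ _ g4_le)).
- by rewrite nnegrE exprn_ge0.
- by rewrite nnegrE mulr_ge0 ?exprn_ge0 // mulr_ge0 // invr_ge0.
rewrite powRM ?exprn_ge0 ?mulr_ge0 // ?invr_ge0 //.
rewrite -[(4^-1 : R) ^+ n]powR_mulrn ?invr_ge0 //.
by rewrite -powRrM (mulrC n%:R) (powRrM _ (p / 4)) powR_mulrn // powR_ge0.
Qed.

Lemma nneseries_le_geometric (f : nat -> R) (K q : R) :
  0 <= K -> 0 < q -> q < 1 ->
  (forall n, 0 <= f n) -> (forall n, f n <= K * q ^+ n) ->
  (\sum_(0 <= n <oo) (f n)%:E <= (K * (1 - q)^-1)%:E)%E.
Proof.
move=> K0 q0 q1 f0 fK; apply: lime_le.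
  by apply: is_cvg_nneseries => n _ _; rewrite lee_fin.
apply: nearW => N; rewrite sumEFin lee_fin.
apply: (le_trans _ (geometric_le_lim N K0 q0 _)); last by rewrite ger0_norm // ltW.
by apply: ler_sum => i _; exact: fK.
Qed.

Definition geometric_ratio (p : R) : R := (4^-1) `^ (p / 4).

(* Sums the geometric bound of [powR_le_geometric] for [t = |z|], then takes the p-th root. *)
Definition dfjp_majorant (p t : R) : R :=
  ((8 * t) `^ (p / 4) * (1 - geometric_ratio p)^-1) `^ p^-1.

Lemma geometric_ratio_gt0 (p : R) : 0 < geometric_ratio p.
Proof. by rewrite powR_gt0 // invr_gt0. Qed.

Lemma geometric_ratio_lt1 (p : R) : 0 < p -> geometric_ratio p < 1.
Proof.
move=> p0; have := @gt0_ltr_powR R (p / 4) (divr_gt0 p0 (ltr0n _ 4)) (4^-1) 1.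
rewrite powR1; apply; rewrite ?nnegrE ?invr_ge0 //.
by rewrite invf_lt1 // ltr1n.
Qed.

Lemma dfjp_majorant_le (p t s : R) : 0 < p -> 0 <= t -> t <= s ->
  dfjp_majorant p t <= dfjp_majorant p s.
Proof.
move=> p0 t0 ts.
have c0 : 0 < (1 - geometric_ratio p)^-1.
  by rewrite invr_gt0 subr_gt0 geometric_ratio_lt1.
apply: ge0_ler_powR.
- by rewrite invr_ge0 ltW.
- by rewrite nnegrE mulr_ge0 ?powR_ge0 // ltW.
- by rewrite nnegrE mulr_ge0 ?powR_ge0 // ltW.
apply: ler_wpM2r; first exact: ltW.
apply: ge0_ler_powR.
- by rewrite divr_ge0 // ltW.
- by rewrite nnegrE mulr_ge0.
- by rewrite nnegrE mulr_ge0 // (le_trans t0).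
by rewrite ler_wpM2l.
Qed.

Lemma dfjp_majorant_small (p e : R) : 0 < p -> 0 < e ->
  exists2 eta, 0 < eta & forall t, 0 <= t -> t <= eta -> dfjp_majorant p t <= e.
Proof.
move=> p0 e0.
have c0 : 0 < (1 - geometric_ratio p)^-1.
  by rewrite invr_gt0 subr_gt0 geometric_ratio_lt1.
set c := (1 - geometric_ratio p)^-1 in c0 *.
exists ((e `^ p / c) `^ (4 / p) / 8).
  by rewrite divr_gt0 // powR_gt0 // divr_gt0 // powR_gt0.
move=> t t0 te; apply: (le_trans (dfjp_majorant_le p0 t0 te)).
rewrite /dfjp_majorant -/c mulrCA mulfV // mulr1 -powRrM.
have -> : 4 / p * (p / 4) = 1 by field; rewrite gt_eqF.
rewrite powRr1; last by rewrite divr_ge0 ?powR_ge0 // ltW.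
by rewrite mulfVK ?gt_eqF // -powRrM mulfV ?gt_eqF // powRr1 // ltW.
Qed.

End GeometricMajorant.

Section ConvexSymmetric.
Variables (R : realType) (X : normedModType R) (W : set X).
Hypotheses (W_convex : convex_set W) (W_sym : symmetric_set W).

Lemma convex_setW (x y : X) (t : R) : W x -> W y -> 0 <= t -> t <= 1 ->
  W (t *: x + (1 - t) *: y).
Proof. by move=> Wx Wy t0 t1; move: (@W_convex x y (Itv01 t0 t1)); rewrite !inE; apply. Qed.

Lemma convex_symmetric_mem0 (w : X) : W w -> W 0.
Proof.
move=> Ww; have := convex_setW (t := 2^-1) Ww (W_sym Ww).
have -> : 1 - 2^-1 = 2^-1 :> R by field.
by rewrite scalerN subrr; apply; rewrite // invf_le1 // ler1n.
Qed.

Hypothesis W0 : W 0.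

Lemma scale_memW (t : R) (w : X) : 0 <= t -> t <= 1 -> W w -> W (t *: w).
Proof.
by move=> t0 t1 Ww; have := convex_setW Ww W0 t0 t1; rewrite scaler0 addr0.
Qed.

Lemma half_sub_memW (a b : X) : W a -> W b -> W (2^-1 *: (a - b)).
Proof.
move=> Wa Wb; have := convex_setW (t := 2^-1) Wa (W_sym Wb).
have -> : 1 - 2^-1 = 2^-1 :> R by field.
by rewrite -scalerDr; apply; rewrite // invf_le1 // ler1n.
Qed.

Lemma average_memW (n : nat) (f : nat -> X) : (forall i, W (f i)) ->
  W ((n.+1%:R)^-1 *: \sum_(i < n.+1) f i).
Proof.
move=> Wf; elim: n => [|n IH]; first by rewrite big_ord1 invr1 scale1r.
have hn := ler0n R n.
rewrite big_ord_recr /=.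
have -> : (n.+2%:R : R)^-1 *: (\sum_(i < n.+1) f i + f n.+1) =
    (n.+1%:R / n.+2%:R) *: ((n.+1%:R)^-1 *: \sum_(i < n.+1) f i) +
    (1 - n.+1%:R / n.+2%:R) *: f n.+1.
  rewrite scalerA scalerDr -[n.+2%:R]natr1 -[n.+1%:R]natr1.
  by congr (_ *: _ + _ *: _); field; rewrite ?(andbT, paddr_eq0) //; lra.
by apply: convex_setW => //; rewrite ler_pdivrMr // mul1r ler_nat.
Qed.

Definition near_2W (z : X) : Prop :=
  forall e, 0 < e -> exists2 w, W w & `|z - 2 *: w| <= e.

Lemma near_2W_opp (z : X) : near_2W z -> near_2W (- z).
Proof.
move=> hz e e0; have [w Ww hw] := hz e e0.
by exists (- w); [exact: W_sym | rewrite scalerN -opprD normrN].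
Qed.

Lemma near_2W_lim_sub (c : nat -> X) (y a : X) :
  (forall k, W (c k)) -> W a -> c @ \oo --> y -> near_2W (y - a).
Proof.
move=> Wc Wa cy e e0; have [N _ hN] := cvgr_dist_le _ _ cy _ e0.
exists (2^-1 *: (c N - a)); first exact: half_sub_memW.
by rewrite scalerA mulfV // scale1r opprB addrA subrK; exact: (hN N (leqnn N)).
Qed.

End ConvexSymmetric.

Section DFJPGauge.
Variables (R : realType) (X : normedModType R) (W : set X).
Hypotheses (W_convex : convex_set W) (W0 : W 0).

Lemma dfjp_gauge_le (n : nat) (z : X) (l : R) :
  0 < l -> dfjp_level W n (l^-1 *: z) -> dfjp_gauge W n z <= l.
Proof. by move=> l0 hl; apply: ge_inf; [exists 0 => x [/ltW] | split]. Qed.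

Lemma dfjp_level_ball (n : nat) (z : X) (l : R) :
  0 < l -> 2 ^+ n * `|z| <= l -> dfjp_level W n (l^-1 *: z).
Proof.
move=> l0 hl; have a0 : 0 < (2 ^+ n : R) by apply: exprn_gt0.
exists 0, ((2 ^+ n / l) *: z); split=> //; split.
  rewrite /closed_unit_ball /= normrZ ger0_norm; last by rewrite divr_ge0 // ltW.
  by rewrite mulrAC ler_pdivrMr // mul1r.
by rewrite scaler0 add0r scalerA mulrA mulVf ?gt_eqF // mul1r.
Qed.

Lemma dfjp_gauge_ge0 (n : nat) (z : X) : 0 <= dfjp_gauge W n z.
Proof.
apply: lb_le_inf; last by move=> x [/ltW].
have l0 : 0 < 2 ^+ n * `|z| + 1 :> R by rewrite ltr_wpDl // mulr_ge0 // exprn_ge0.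
by exists (2 ^+ n * `|z| + 1); split; last by apply: dfjp_level_ball; rewrite ?lerDl.
Qed.

Lemma dfjp_gauge_le_norm (n : nat) (z : X) : dfjp_gauge W n z <= 2 ^+ n * `|z|.
Proof.
apply/ler_addgt0Pr => e e0.
have l0 : 0 < 2 ^+ n * `|z| + e by rewrite ltr_wpDl // mulr_ge0 // exprn_ge0.
by apply: (dfjp_gauge_le l0); apply: (dfjp_level_ball l0); rewrite lerDl ltW.
Qed.

Lemma dfjp_gauge_le_near_2W (n : nat) (z : X) :
  near_2W W z -> dfjp_gauge W n z <= 2 * (2 ^+ n)^-1.
Proof.
move=> hz; apply/ler_addgt0Pr => d d0.
have a0 : 0 < (2 ^+ n : R) by apply: exprn_gt0.
set a := (2 ^+ n : R) in a0 *.
have l0 : 0 < 2 * a^-1 + d by rewrite ltr_wpDl // mulr_ge0 // invr_ge0 ltW.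
set l := 2 * a^-1 + d in l0 *.
have [w Ww hw] := hz (l / a) (divr_gt0 l0 a0).
apply: dfjp_gauge_le => //.
(* l^-1 z = 2^n (2 / (l 2^n)) w + 2^-n (2^n / l) (z - 2 w), and 2 / (l 2^n) <= 1. *)
exists ((2 / (l * a)) *: w), ((a / l) *: (z - 2 *: w)); split.
  apply: (scale_memW W_convex W0) => //; first by rewrite divr_ge0 // mulr_ge0 // ltW.
  rewrite ler_pdivrMr ?mulr_gt0 // mul1r /l mulrDl -mulrA mulVf ?gt_eqF // mulr1.
  by rewrite lerDl mulr_ge0 // ltW.
split.
  rewrite /closed_unit_ball /= normrZ ger0_norm; last by rewrite divr_ge0 // ltW.
  by rewrite -ler_pdivlMl ?divr_gt0 // invf_div mulr1.
rewrite !scalerA.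
have -> : a * (2 / (l * a)) = l^-1 * 2 by field; rewrite !gt_eqF.
have -> : a^-1 * (a / l) = l^-1 by field; rewrite !gt_eqF.
by rewrite -scalerA -scalerDr [_ + (z - _)]addrC subrK.
Qed.

Lemma norm_le_dfjp_gauge0 (M : R) (z : X) : (forall w, W w -> `|w| <= M) ->
  `|z| <= (M + 1) * dfjp_gauge W 0 z.
Proof.
move=> WM; have M0 : 0 <= M by have := WM 0 W0; rewrite normr0.
have M10 : 0 < M + 1 by rewrite ltr_wpDl.
rewrite -ler_pdivrMl //; apply: lb_le_inf.
  have l0 : 0 < 2 ^+ 0 * `|z| + 1 :> R by rewrite ltr_wpDl // mulr_ge0 // exprn_ge0.
  by exists (2 ^+ 0 * `|z| + 1); split; last by apply: dfjp_level_ball; rewrite ?lerDl.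
move=> l [l0 [w [b [Ww [hb hl]]]]].
rewrite expr0 invr1 !scale1r in hl.
have -> : z = l *: (w + b) by rewrite -hl scalerA mulfV ?gt_eqF // scale1r.
rewrite ler_pdivrMl // normrZ gtr0_norm // mulrC.
apply: ler_wpM2r; first exact: ltW.
by rewrite (le_trans (ler_normD _ _)) // lerD // WM.
Qed.

Variable p : R.
Hypothesis p_gt0 : 0 < p.

Lemma dfjp_norm_le_majorant (z : X) : near_2W W z ->
  exists2 h, dfjp_norm W p z = h%:E & 0 <= h <= dfjp_majorant p `|z|.
Proof.
move=> hz.
have S_le : (\sum_(0 <= n <oo) ((dfjp_gauge W n z) `^ p)%:E <=
    ((8 * `|z|) `^ (p / 4) * (1 - geometric_ratio p)^-1)%:E)%E.
  apply: nneseries_le_geometric => //.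
  - exact: geometric_ratio_gt0.
  - exact: geometric_ratio_lt1.
  - by move=> n; exact: powR_ge0.
  - move=> n; apply: powR_le_geometric => //.
    + exact: dfjp_gauge_ge0.
    + exact: dfjp_gauge_le_near_2W.
    + exact: dfjp_gauge_le_norm.
set S := (\sum_(0 <= n <oo) _)%E in S_le.
have S0 : (0 <= S)%E by apply: nneseries_ge0 => n _ _; rewrite lee_fin powR_ge0.
have Sfin : S \is a fin_num by rewrite ge0_fin_numE // (le_lt_trans S_le) ?ltry.
exists (fine S `^ p^-1); first by rewrite /dfjp_norm -/S -[S]fineK // poweR_EFin.
rewrite powR_ge0 /=; apply: ge0_ler_powR.
- by rewrite invr_ge0 ltW.
- by rewrite nnegrE fine_ge0.
- by rewrite nnegrE mulr_ge0 ?powR_ge0 // invr_ge0 subr_ge0 ltW ?geometric_ratio_lt1.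
by rewrite -lee_fin fineK.
Qed.

Lemma dfjp_norm_cvg0 (z : nat -> X) : (forall k, near_2W W (z k)) ->
  z @ \oo --> 0 -> (fun k => dfjp_norm W p (z k)) @ \oo --> 0%E.
Proof.
move=> hz z0; apply: cvg_EFin.
  by apply: nearW => k; have [h -> _] := dfjp_norm_le_majorant (hz k).
apply/cvgr0Pnorm_le => e e0.
have [eta eta0 heta] := dfjp_majorant_small p_gt0 e0.
move/cvgr0Pnorm_le : z0 => /(_ _ eta0).
apply: filterS => k zk.
have [h hE /andP[h0 hB]] := dfjp_norm_le_majorant (hz k).
by rewrite /= hE /= ger0_norm // (le_trans hB) // heta.
Qed.

Lemma dfjp_gauge0_le_norm (z : X) : dfjp_norm W p z \is a fin_num ->
  dfjp_gauge W 0 z <= fine (dfjp_norm W p z).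
Proof.
rewrite /dfjp_norm; set S := (\sum_(0 <= n <oo) _)%E => normfin.
have S0 : (0 <= S)%E by apply: nneseries_ge0 => n _ _; rewrite lee_fin powR_ge0.
have S_ge : (((dfjp_gauge W 0 z) `^ p)%:E <= S)%E.
  have := @nneseries_lim_ge R (fun n => ((dfjp_gauge W n z) `^ p)%:E) xpredT 0 1.
  by rewrite big_nat1; apply => n _ _; rewrite lee_fin powR_ge0.
have Sfin : S \is a fin_num.
  rewrite ge0_fin_numE // lt_neqAle leey andbT; apply/eqP => Sy.
  by move: normfin; rewrite Sy poweRyr // invr_neq0 // gt_eqF.
rewrite -[S]fineK // poweR_EFin /=.
rewrite -[S]fineK // lee_fin in S_ge.
have g0 := dfjp_gauge_ge0 0 z.
rewrite -{1}(powRr1 g0) -(@mulfV _ p) ?gt_eqF // powRrM.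
apply: ge0_ler_powR => //.
- by rewrite invr_ge0 ltW.
- by rewrite nnegrE powR_ge0.
- by rewrite nnegrE fine_ge0.
Qed.

End DFJPGauge.

Section BanachSaks.
Variables (R : realType) (X : normedModType R) (W : set X) (p : R) (A : set X).
Hypotheses (W_convex : convex_set W) (W_sym : symmetric_set W).
Hypotheses (p_gt0 : 0 < p) (AW : A `<=` W).

Lemma banach_saks_X_Y : banach_saks_X A -> banach_saks_Y W p A.
Proof.
move=> hX u Au; have [phi [phi_incr [y cy]]] := hX u Au.
have W0 := convex_symmetric_mem0 W_convex W_sym (AW (Au 0%N)).
have Wc k : W (Defs.cesaro u phi k).
  exact: (average_memW W_convex k (fun i => AW (Au (phi i)))).
exists phi; split => //; exists y; split.
  have := near_2W_lim_sub W_convex W_sym Wc W0 cy; rewrite subr0.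
  move=> /(dfjp_norm_le_majorant W_convex W0 p_gt0)[h hE _].
  by rewrite /dfjp_space /= hE ltry.
apply: (dfjp_norm_cvg0 W_convex W0 p_gt0); last exact/subr_cvg0.
move=> k; rewrite -opprB; apply: (near_2W_opp W_sym).
exact: (near_2W_lim_sub W_convex W_sym Wc (Wc k) cy).
Qed.

Lemma banach_saks_Y_X : bounded_set W -> banach_saks_Y W p A -> banach_saks_X A.
Proof.
move=> [M [_ WM]] hY u Au; have [phi [phi_incr [y [_ cy]]]] := hY u Au.
have W0 := convex_symmetric_mem0 W_convex W_sym (AW (Au 0%N)).
have WM1 w : W w -> `|w| <= M + 1 by move=> Ww; apply: WM; rewrite ?ltrDl.
have M1 : 0 < M + 1 + 1 by rewrite ltr_wpDl // (le_trans _ (WM1 _ W0)) ?normr0.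
exists phi; split => //; exists y.
move/fine_cvgP: cy => [normfin /cvgr0Pnorm_le normcvg].
apply/cvgrPdist_le => e e0.
apply: filterS2 normfin (normcvg _ (divr_gt0 e0 M1)) => k kfin ke.
rewrite distrC (le_trans (norm_le_dfjp_gauge0 W0 _ WM1)) //.
rewrite mulrC -ler_pdivlMr // (le_trans (dfjp_gauge0_le_norm W0 p_gt0 kfin)) //.
exact: le_trans (ler_norm _) ke.
Qed.

End BanachSaks.

Theorem lemma4p14 (R : realType) (X : completeNormedModType R)
  (W : set X) (p : R) (A : set X) :
  convex_set W -> symmetric_set W -> bounded_set W ->
  1 < p -> A `<=` W ->
  banach_saks_X A <-> banach_saks_Y W p A.
Proof.
move=> W_convex W_sym W_bounded p_gt1 AW.
have p_gt0 : 0 < p := lt_trans ltr01 p_gt1.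
split; first exact: banach_saks_X_Y.
exact: banach_saks_Y_X.
Qed.
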